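(* Let $c\ge0$ and $g_0,g_1,\dots,g_K\in\mathbb{R}^m$. Let $d^*$ be the solution of $$\max_{d\in\mathbb{R}^m}\ \min_{i\in[K]} g_i^\top d\quad\text{s.t.}\quad \|g_0-d\|\le c\|g_0\|.$$ Then $$d^*=g_0+\frac{c\|g_0\|}{\|g_{w^*}\|}\,g_{w^*},$$ where $g_{w^*}=\sum_i w^*_i g_i$ and $w^*$ is the solution of $$\min_{w\in\mathcal W}\ g_w^\top g_0+c\|g_0\|\,\|g_w\|.$$ In addition, $$\min_i g_i^\top d^*=g_{w^*}^\top g_0+c\|g_0\|\,\|g_{w^*}\|.$$
   Context: $\mathcal W=\{w\in\mathbb{R}^K: \sum_i w_i=1,\ w_i\ge0\ \forall i\in[K]\}$ is the probability simplex, and for $w\in\mathcal W$, $g_w=\sum_{i=1}^K w_i g_i$. $[K]=\{1,\dots,K\}$. *)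

From HB Require Import structures.
From mathcomp Require Import all_boot all_order all_algebra.
Set Implicit Arguments. Unset Strict Implicit. Unset Printing Implicit Defensive.
Import Order.TTheory GRing.Theory Num.Theory.
Local Open Scope ring_scope.

Section Defs.
Variables (R : rcfType) (m K : nat).

Definition dotv (u v : 'rV[R]_m) : R := \sum_(j < m) u 0 j * v 0 j.

Definition normv (u : 'rV[R]_m) : R := Num.sqrt (dotv u u).

(* min_{i in [K]} g_i^T d  (minimum of a nonempty finite list; K >= 1 assumed
   wherever this is used). *)
Definition min_gain (g : 'I_K -> 'rV[R]_m) (d : 'rV[R]_m) : R :=
  let s := [seq dotv (g i) d | i <- enum 'I_K] in
  \big[Num.min/head 0 s]_(x <- s) x.

Definition in_simplex (w : 'I_K -> R) : Prop :=
  (forall i, 0 <= w i) /\ \sum_(i < K) w i = 1.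

Definition gw (g : 'I_K -> 'rV[R]_m) (w : 'I_K -> R) : 'rV[R]_m :=
  \sum_(i < K) w i *: g i.

Definition feasible (c : R) (g0 d : 'rV[R]_m) : Prop :=
  normv (g0 - d) <= c * normv g0.

Definition primal_opt (c : R) (g0 : 'rV[R]_m) (g : 'I_K -> 'rV[R]_m)
  (d : 'rV[R]_m) : Prop :=
  feasible c g0 d /\
  forall d', feasible c g0 d' -> min_gain g d' <= min_gain g d.

Definition dual_obj (c : R) (g0 : 'rV[R]_m) (g : 'I_K -> 'rV[R]_m)
  (w : 'I_K -> R) : R :=
  dotv (gw g w) g0 + c * normv g0 * normv (gw g w).

Definition dual_opt (c : R) (g0 : 'rV[R]_m) (g : 'I_K -> 'rV[R]_m)
  (w : 'I_K -> R) : Prop :=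
  in_simplex w /\
  forall w', in_simplex w' -> dual_obj c g0 g w <= dual_obj c g0 g w'.

End Defs.

(* Put a := g_{w*}, r := c ||g0|| and N := ||a|| > 0.  Minimality of the dual
   objective along the edge from w* towards each vertex e_i yields the
   first-order condition  r <a, g_i - a> + N <g_i - a, g0> >= 0,  which says
   exactly that the feasible point  g0 + (r/N) a  gains at least
   <a, g0> + r N  against every g_i.  Hence min_i <g_i, d*> >= <a, g0> + r N.
   On the other hand min_i <g_i, d*> <= <a, d*>, so  <a, d* - g0> >= r N  while
   ||d* - g0|| <= r: this is the equality case of Cauchy-Schwarz, forcing
   d* - g0 = (r/N) a. *)

From HB Require Import structures.
From mathcomp Require Import all_boot all_order all_algebra ring lra.
Import Order.TTheory GRing.Theory Num.Theory.
Local Open Scope ring_scope.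
Set Implicit Arguments. Unset Strict Implicit. Unset Printing Implicit Defensive.

Section InnerProduct.
Variables (R : rcfType) (m : nat).
Implicit Types (u v w : 'rV[R]_m) (k r : R).

Lemma dotvC u v : dotv u v = dotv v u.
Proof. by apply: eq_bigr => j _; rewrite mulrC. Qed.

Lemma dotvDl u v w : dotv (u + v) w = dotv u w + dotv v w.
Proof.
by rewrite /dotv -big_split; apply: eq_bigr => j _; rewrite mxE mulrDl.
Qed.

Lemma dotvZl k u v : dotv (k *: u) v = k * dotv u v.
Proof.
by rewrite /dotv mulr_sumr; apply: eq_bigr => j _; rewrite mxE mulrA.
Qed.

Lemma dotvNl u v : dotv (- u) v = - dotv u v.
Proof. by rewrite -scaleN1r dotvZl mulN1r. Qed.

Lemma dotvBl u v w : dotv (u - v) w = dotv u w - dotv v w.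
Proof. by rewrite dotvDl dotvNl. Qed.

Lemma dotv0l v : dotv 0 v = 0.
Proof. by rewrite -(scale0r 0) dotvZl mul0r. Qed.

Lemma dotvDr u v w : dotv u (v + w) = dotv u v + dotv u w.
Proof. by rewrite !(dotvC u) dotvDl. Qed.

Lemma dotvZr k u v : dotv u (k *: v) = k * dotv u v.
Proof. by rewrite !(dotvC u) dotvZl. Qed.

Lemma dotvBr u v w : dotv u (v - w) = dotv u v - dotv u w.
Proof. by rewrite !(dotvC u) dotvBl. Qed.

Lemma dotv_suml (I : Type) (s : seq I) (F : I -> 'rV[R]_m) v :
  dotv (\sum_(i <- s) F i) v = \sum_(i <- s) dotv (F i) v.
Proof.
exact: (big_morph (fun u => dotv u v) (fun x y => dotvDl x y v) (dotv0l v)).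
Qed.

Lemma dotvv_ge0 u : 0 <= dotv u u.
Proof. by apply: sumr_ge0 => j _; rewrite -expr2 sqr_ge0. Qed.

Lemma dotvv_eq0 u : (dotv u u == 0) = (u == 0).
Proof.
apply/eqP/eqP => [uu0|->]; last by rewrite dotv0l.
apply/rowP => j; rewrite mxE; apply/eqP; rewrite -sqrf_eq0 expr2; apply/eqP.
have sqr_u_ge0 i : true -> 0 <= u 0 i * u 0 i by rewrite -expr2 sqr_ge0.
exact: (psumr_eq0P sqr_u_ge0 uu0).
Qed.

Lemma normv_ge0 u : 0 <= normv u.
Proof. exact: sqrtr_ge0. Qed.

Lemma sqr_normv u : normv u ^+ 2 = dotv u u.
Proof. by rewrite sqr_sqrtr // dotvv_ge0. Qed.

Lemma normv_gt0 u : (0 < normv u) = (u != 0).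
Proof. by rewrite sqrtr_gt0 lt_def dotvv_ge0 dotvv_eq0 andbT. Qed.

Lemma normvZ k u : normv (k *: u) = `|k| * normv u.
Proof.
by rewrite /normv dotvZl dotvZr mulrA -expr2 sqrtrM ?sqr_ge0 // sqrtr_sqr.
Qed.

Lemma normvN u : normv (- u) = normv u.
Proof. by rewrite -scaleN1r normvZ normrN1 mul1r. Qed.

Lemma normv_le u r : 0 <= r -> (normv u <= r) = (dotv u u <= r ^+ 2).
Proof.
by move=> r_ge0; rewrite -{1}(ger0_norm r_ge0) -sqrtr_sqr ler_sqrt ?sqr_ge0.
Qed.

End InnerProduct.

Section Simplex.
Variables (R : rcfType) (m K : nat) (g : 'I_K -> 'rV[R]_m).
Implicit Types (w : 'I_K -> R) (t : R).

Definition vertex (i : 'I_K) : 'I_K -> R := fun j => (j == i)%:R.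

Definition lerpw w (w' : 'I_K -> R) t : 'I_K -> R :=
  fun j => w j + t * (w' j - w j).

Lemma in_simplex_vertex i : in_simplex (vertex i).
Proof.
split=> [j|]; first by rewrite ler0n.
by rewrite (bigD1 i) //= /vertex eqxx big1 ?addr0 // => j /negbTE ->.
Qed.

Lemma in_simplex_lerp w (w' : 'I_K -> R) t :
  in_simplex w -> in_simplex w' -> 0 <= t <= 1 -> in_simplex (lerpw w w' t).
Proof.
move=> [w0 w1] [w'0 w'1] /andP[t0 t1]; split=> [j|].
  have := w0 j; have := w'0 j; rewrite /lerpw; nra.
by rewrite big_split /= -mulr_sumr sumrB w1 w'1 subrr mulr0 addr0.
Qed.

Lemma gw_vertex i : gw g (vertex i) = g i.
Proof.
rewrite /gw (bigD1 i) //= /vertex eqxx scale1r big1 ?addr0 // => j /negbTE ->.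
by rewrite scale0r.
Qed.

Lemma gw_lerp w (w' : 'I_K -> R) t :
  gw g (lerpw w w' t) = gw g w + t *: (gw g w' - gw g w).
Proof.
rewrite /gw /lerpw -sumrB scaler_sumr -big_split /=.
by apply: eq_bigr => j _; rewrite scalerDl -scalerA scalerBl.
Qed.

Lemma dotv_gw w v : dotv (gw g w) v = \sum_(i < K) w i * dotv (g i) v.
Proof. by rewrite dotv_suml; apply: eq_bigr => i _; rewrite dotvZl. Qed.

End Simplex.

Section MinGain.
Variables (R : rcfType) (m K : nat) (g : 'I_K -> 'rV[R]_m).
Implicit Types (d : 'rV[R]_m) (w : 'I_K -> R).

Lemma min_gain_le d i : min_gain g d <= dotv (g i) d.
Proof. by rewrite /min_gain big_map ge_bigmin_seq ?mem_enum. Qed.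

Lemma le_min_gain d z :
  (0 < K)%N -> (forall i, z <= dotv (g i) d) -> z <= min_gain g d.
Proof.
move=> K_gt0 zle; rewrite /min_gain big_map; apply: le_bigmin => //.
by case: K g K_gt0 zle => // K' g' _ zle; rewrite enum_ordSl /=; exact: zle.
Qed.

Lemma min_gain_le_gw d w : in_simplex w -> min_gain g d <= dotv (gw g w) d.
Proof.
move=> [w0 w1]; rewrite dotv_gw -[min_gain g d]mul1r -w1 mulr_suml.
by apply: ler_sum => i _; rewrite ler_wpM2l ?min_gain_le.
Qed.

End MinGain.

Lemma affine_ge0_near0 (R : realFieldType) (x y : R) :
  (forall t, 0 < t <= 1 -> 0 <= x + t * y) -> 0 <= x.
Proof.
move=> affine_ge0; rewrite leNgt; apply/negP => x_lt0.
have y1_gt0 : 0 < `|y| + 1 by rewrite ltr_wpDl.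
pose t := Num.min 1 (- x / (`|y| + 1)).
have t_gt0 : 0 < t by rewrite lt_min ltr01 divr_gt0 ?oppr_gt0.
have t_le1 : t <= 1 by rewrite ge_min lexx.
have ty_le : t * (`|y| + 1) <= - x by rewrite -ler_pdivlMr // ge_min lexx orbT.
have := affine_ge0 t; rewrite t_gt0 t_le1 => /(_ isT).
have := ler_norm y; nra.
Qed.

Section LinNorm.
Variables (R : rcfType) (m : nat).
Implicit Types (a b e u v : 'rV[R]_m) (k r : R).

Definition lin_normv r v u := dotv u v + r * normv u.

Lemma lin_normv_dir_ge0 r v a b : 0 <= r -> a != 0 ->
  (forall t, 0 < t <= 1 -> lin_normv r v a <= lin_normv r v (a + t *: b)) ->
  0 <= r * dotv a b + normv a * dotv b v.
Proof.
move=> r_ge0 a_neq0 a_min; have N_gt0 : 0 < normv a by rewrite normv_gt0.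
rewrite -(pmulr_rge0 _ (ltr0Sn _ 1)).
apply: (@affine_ge0_near0 _ _ (r * dotv b b)) => t /andP[t_gt0 t_le1].
have := a_min t; rewrite t_gt0 t_le1 /lin_normv dotvDl dotvZl => /(_ isT).
have S2 : normv (a + t *: b) ^+ 2
         = normv a ^+ 2 + 2 * t * dotv a b + t ^+ 2 * dotv b b.
  rewrite !sqr_normv !(dotvDl, dotvDr, dotvZl, dotvZr) (dotvC b a); ring.
move: S2; set S := normv _; set N := normv a => S2 a_le.
have incr_ge0 : 0 <= t * dotv b v + r * (S - N) by lra.
rewrite -(pmulr_rge0 _ t_gt0).
(* 2 N (S - N) = (S^2 - N^2) - (S - N)^2 removes the square root. *)
have -> : t * (2 * (r * dotv a b + N * dotv b v) + t * (r * dotv b b)) =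
    2 * N * (t * dotv b v + r * (S - N)) + r * (S - N) ^+ 2
    + r * (N ^+ 2 + 2 * t * dotv a b + t ^+ 2 * dotv b b - S ^+ 2) by ring.
rewrite S2 subrr mulr0 addr0.
apply: addr_ge0; last exact: mulr_ge0 r_ge0 (sqr_ge0 _).
by rewrite mulr_ge0 // mulr_ge0 // ltW.
Qed.

Lemma eq_scalev_of_dotv_le k a e : 0 <= k ->
  normv e <= k * normv a -> k * dotv a a <= dotv a e -> e = k *: a.
Proof.
move=> k_ge0 + ae_ge.
rewrite normv_le ?mulr_ge0 ?normv_ge0 // exprMn sqr_normv => ee_le.
apply/eqP; rewrite -subr_eq0 -dotvv_eq0 eq_le dotvv_ge0 andbT.
rewrite !(dotvBl, dotvBr, dotvZl, dotvZr) (dotvC e a).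
have := ler_wpM2l k_ge0 ae_ge; lra.
Qed.

End LinNorm.

Section Duality.
Variables (R : rcfType) (m K : nat) (c : R).
Variables (g0 : 'rV[R]_m) (g : 'I_K -> 'rV[R]_m).
Hypothesis c_ge0 : 0 <= c.
Implicit Types (a d : 'rV[R]_m) (w : 'I_K -> R).

Definition dual_to_primal a := g0 + (c * normv g0 / normv a) *: a.

Lemma radius_ge0 : 0 <= c * normv g0.
Proof. by rewrite mulr_ge0 ?normv_ge0. Qed.

Lemma feasible_dual_to_primal a : a != 0 -> feasible c g0 (dual_to_primal a).
Proof.
rewrite -normv_gt0 => N_gt0.
rewrite /feasible /dual_to_primal opprD addNKr normvN normvZ ger0_norm.
  by rewrite divfK ?gt_eqF.
by rewrite divr_ge0 ?radius_ge0 ?ltW.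
Qed.

Lemma dotv_dual_to_primal a : a != 0 ->
  dotv a (dual_to_primal a) = dotv a g0 + c * normv g0 * normv a.
Proof.
rewrite -normv_gt0 => N_gt0.
by rewrite dotvDr dotvZr -sqr_normv expr2 mulrA divfK ?gt_eqF.
Qed.

Lemma dual_opt_dir_ge0 w i : dual_opt c g0 g w -> gw g w != 0 ->
  0 <= c * normv g0 * dotv (gw g w) (g i - gw g w)
       + normv (gw g w) * dotv (g i - gw g w) g0.
Proof.
move=> [w_simplex w_min] a_neq0.
(* dual_obj c g0 g is convertible to lin_normv (c * normv g0) g0 \o gw g. *)
apply: lin_normv_dir_ge0 => // [|t /andP[/ltW t_ge0 t_le1]].
  exact: radius_ge0.
rewrite -(gw_vertex g i) -gw_lerp; apply: w_min.
by apply: in_simplex_lerp; rewrite ?t_ge0 ?t_le1 //; exact: in_simplex_vertex.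
Qed.

Lemma dual_opt_le_gain w i : dual_opt c g0 g w -> gw g w != 0 ->
  dual_obj c g0 g w <= dotv (g i) (dual_to_primal (gw g w)).
Proof.
move=> w_opt a_neq0; have := dual_opt_dir_ge0 i w_opt a_neq0.
move: a_neq0; rewrite -normv_gt0 /dual_obj /dual_to_primal.
set a := gw g w; set r := c * normv g0; set N := normv a => N_gt0 dir_ge0.
rewrite dotvDr dotvZr -(ler_pM2l N_gt0) !mulrDr [N * (r / N * _)]mulrA.
rewrite [N * (r / N)]mulrC divfK ?gt_eqF //.
move: dir_ge0; rewrite dotvBr dotvBl -sqr_normv -/N (dotvC (g i) a); nra.
Qed.

Lemma feasible_eq_dual_to_primal a d : a != 0 -> feasible c g0 d ->
  dotv a g0 + c * normv g0 * normv a <= dotv a d -> d = dual_to_primal a.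
Proof.
rewrite -normv_gt0 /feasible /dual_to_primal => N_gt0 d_feas d_gain.
rewrite -(subrKC g0 d); congr (_ + _); apply: eq_scalev_of_dotv_le.
- by rewrite divr_ge0 ?radius_ge0 ?ltW.
- by rewrite divfK ?gt_eqF // -normvN opprB.
- by rewrite -sqr_normv expr2 mulrA divfK ?gt_eqF // dotvBr lerBrDl.
Qed.

End Duality.

Unset Implicit Arguments.

Theorem lemma1 (R : rcfType) (m K : nat) (c : R) (g0 : 'rV[R]_m)
  (g : 'I_K -> 'rV[R]_m) (dstar : 'rV[R]_m) (wstar : 'I_K -> R) :
  (0 < K)%N ->
  0 <= c ->
  primal_opt c g0 g dstar ->
  dual_opt c g0 g wstar ->
  gw g wstar != 0 ->
  dstar = g0 + (c * normv g0 / normv (gw g wstar)) *: gw g wstar /\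
  min_gain g dstar = dotv (gw g wstar) g0 + c * normv g0 * normv (gw g wstar).
Proof.
move=> K_gt0 c_ge0 [dstar_feas dstar_max] wstar_opt a_neq0.
have lower : dual_obj c g0 g wstar <= min_gain g dstar.
  apply: le_trans (dstar_max _ (feasible_dual_to_primal g0 c_ge0 a_neq0)).
  by apply: le_min_gain => // i; exact: dual_opt_le_gain.
have upper : min_gain g dstar <= dotv (gw g wstar) dstar.
  exact: min_gain_le_gw wstar_opt.1.
have dstarE : dstar = dual_to_primal c g0 (gw g wstar).
  by apply: feasible_eq_dual_to_primal => //; exact: le_trans lower upper.
split=> //; apply/le_anti; rewrite lower andbT.
by rewrite (le_trans upper) // dstarE dotv_dual_to_primal.
Qed.
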